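(* Let $E$ be an elliptic curve defined over a field $K$ with $\operatorname{char}K\neq 2$, and let $P\in E(K)$. Then at least one of the following holds: (i) $\delta_2^P$ is irreducible over $K$; (ii) $P$ is a $2$-torsion point; (iii) there exists $Q\in E(K)$ with $2Q=P$; (iv) there exist an elliptic curve $E'/K$, an isogeny $\psi:E'\to E$ of degree $2$ defined over $K$, and a point $Q\in E'(K)$ with $\psi(Q)=P$.
   Context: For $E$ with Weierstrass coordinate functions $x,y$ and $m\in\mathbb{Z}$, $\psi_m$ is the $m$-th division polynomial ($\psi_m^2\in K[x]$), $\theta_m=x\psi_m^2-\psi_{m+1}\psi_{m-1}$, so $x([m]R)=\theta_m(x(R))/\psi_m^2(x(R))$; and $\delta_m^P=\theta_m-x(P)\psi_m^2$ if $P\ne O$, $\delta_m^P=\psi_m^2$ if $P=O$. *)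

From HB Require Import structures.
From mathcomp Require Import all_boot all_order all_algebra.
Set Implicit Arguments. Unset Strict Implicit. Unset Printing Implicit Defensive.
Import Order.TTheory GRing.Theory Num.Theory.
Local Open Scope ring_scope.

(* Weierstrass equation  y^2 + a1 x y + a3 y = x^3 + a2 x^2 + a4 x + a6 *)
Record wcurve (K : fieldType) := WCurve { a1 : K; a2 : K; a3 : K; a4 : K; a6 : K }.

Section Weierstrass.
Variables (K : fieldType) (E : wcurve K).

Definition b2 : K := a1 E ^+ 2 + 4%:R * a2 E.
Definition b4 : K := 2%:R * a4 E + a1 E * a3 E.
Definition b6 : K := a3 E ^+ 2 + 4%:R * a6 E.
Definition b8 : K := a1 E ^+ 2 * a6 E + 4%:R * a2 E * a6 E - a1 E * a3 E * a4 E
                     + a2 E * a3 E ^+ 2 - a4 E ^+ 2.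
Definition disc : K := - b2 ^+ 2 * b8 - 8%:R * b4 ^+ 3 - 27%:R * b6 ^+ 2
                       + 9%:R * b2 * b4 * b6.

Definition elliptic : bool := disc != 0.

Inductive point := Inf | Aff of K & K.

Definition on_curve (P : point) : bool :=
  match P with
  | Inf => true
  | Aff x y => y ^+ 2 + a1 E * x * y + a3 E * y
               == x ^+ 3 + a2 E * x ^+ 2 + a4 E * x + a6 E
  end.

Definition dbl (P : point) : point :=
  match P with
  | Inf => Inf
  | Aff x y =>
    let d := 2%:R * y + a1 E * x + a3 E in
    if d == 0 then Inf else
    let l := (3%:R * x ^+ 2 + 2%:R * a2 E * x + a4 E - a1 E * y) / d in
    let nu := y - l * x in
    let x3 := l ^+ 2 + a1 E * l - a2 E - 2%:R * x in
    Aff x3 (- (l + a1 E) * x3 - nu - a3 E)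
  end.

Definition two_torsion (P : point) : Prop := dbl P = Inf.

(* division polynomials: psi_2^2, psi_3 (psi_1 = 1), theta_2 = x psi_2^2 - psi_3 psi_1 *)
Definition psi2sq : {poly K} :=
  4%:R *: 'X^3 + b2 *: 'X^2 + (2%:R * b4) *: 'X + b6%:P.
Definition psi3 : {poly K} :=
  3%:R *: 'X^4 + b2 *: 'X^3 + (3%:R * b4) *: 'X^2 + (3%:R * b6) *: 'X + b8%:P.
Definition theta2 : {poly K} := 'X * psi2sq - psi3 * 1.

Definition delta2 (P : point) : {poly K} :=
  match P with
  | Inf => psi2sq
  | Aff x _ => theta2 - x *: psi2sq
  end.

(* Coordinate ring K[x,y]/(Weierstrass eq.), an element p.1 + p.2 * y
   represented by a pair of polynomials in x (free K[x]-module, basis 1, y). *)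
Definition cubic : {poly K} := 'X^3 + a2 E *: 'X^2 + a4 E *: 'X + (a6 E)%:P.
Definition lin : {poly K} := a1 E *: 'X + (a3 E)%:P.
(* product, using y^2 = cubic - lin * y *)
Definition cmul (p q : {poly K} * {poly K}) : {poly K} * {poly K} :=
  (p.1 * q.1 + p.2 * q.2 * cubic, p.1 * q.2 + p.2 * q.1 - p.2 * q.2 * lin).
Definition cscale (r : {poly K}) (p : {poly K} * {poly K}) := (r * p.1, r * p.2).
Definition cadd (p q : {poly K} * {poly K}) := (p.1 + q.1, p.2 + q.2).

End Weierstrass.

Arguments Inf {K}.
Arguments Aff {K}.

(* A rational map E' --> E defined over K, written in coordinates:
     (x, y) |-> ( xn(x)/xd(x) , (y0(x) + y1(x) y) / yd(x) ).
   Every morphism E' -> E commuting with negation has this shape, since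
   K(E') = K(x) + K(x) y and x o psi is invariant under negation. *)
Record cmap (K : fieldType) := CMap { xn : {poly K}; xd : {poly K};
                                     y0 : {poly K}; y1 : {poly K}; yd : {poly K} }.

Section Isogeny.
Variables (K : fieldType) (E' E : wcurve K) (f : cmap K).

(* f maps E' into E: the Weierstrass equation of E holds identically in the
   function field K(E'); after clearing the denominator xd^3 yd^2 this is an
   identity in the coordinate ring of E'. *)
Definition maps_into : Prop :=
  let N := xn f in let M := xd f in let D := yd f in
  let Y := (y0 f, y1 f) in
  cadd (cscale (M ^+ 3) (cmul E' Y Y))
       (cscale (a1 E *: (N * M ^+ 2 * D) + a3 E *: (M ^+ 3 * D)) Y)
  = ((N ^+ 3 + a2 E *: (N ^+ 2 * M) + a4 E *: (N * M ^+ 2) + a6 E *: M ^+ 3)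
       * D ^+ 2, 0).

(* f is an isogeny of degree 2 defined over K: a morphism E' -> E sending O'
   to O (x o f has a pole at O', i.e. deg xn > deg xd), whose degree
   (= degree of the x-coordinate rational function xn/xd in lowest terms)
   is 2. *)
Definition isogeny_deg2 : Prop :=
  [/\ maps_into, xd f != 0, yd f != 0, coprimep (xn f) (xd f)
    & size (xn f) = 3%N /\ (size (xd f) < size (xn f))%N].

(* f(Q) = P  (evaluation of the morphism at a K-point; at points where the
   given coordinate formula is not visibly regular it is left undetermined,
   except at poles of x o f, which map to O). *)
Definition maps_to (Q : point K) (P : point K) : Prop :=
  match Q with
  | Inf => P = Inf
  | Aff x y =>
    if (xd f).[x] == 0 then P = Inf
    else (yd f).[x] != 0 /\
         P = Aff ((xn f).[x] / (xd f).[x])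
                 (((y0 f).[x] + (y1 f).[x] * y) / (yd f).[x])
  end.

End Isogeny.

(* Complete the square: with eta = y + (a1 x + a3)/2 the curve reads
   eta^2 = g(x) = x^3 + c2 x^2 + c1 x + c0, and delta_2^P(r) = g'(r)^2 - 4 (2 r + c2 + x(P)) g(r) is a monic
   quartic whose roots are the abscissae of the halves Q of +-P.  Assume P is not
   2-torsion and delta_2^P is reducible.  If it has a root r, nonsingularity gives
   g(r) <> 0, and the tangent line at the point of abscissa r fixes the ordinate of a
   K-rational Q with 2Q = P.  Otherwise delta_2^P is a product of two monic quadratics
   X^2 - s X + t and X^2 - S X + T; comparing coefficients shows that
   e = (t - T)/(s - S) is a root of g, so E has a K-rational 2-torsion point, and P is
   the image of a K-point of abscissa s + e + c2 under the 2-isogeny onto E from the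
   curve Y^2 = X (X^2 - 2 a X + a^2 - 4 b), where g(x + e) = x (x^2 + a x + b). *)

From HB Require Import structures.
From mathcomp Require Import all_boot all_order all_algebra.
From mathcomp Require Import ring zify.
From Stdlib Require Import Classical.
Set Implicit Arguments. Unset Strict Implicit. Unset Printing Implicit Defensive.
Import Order.TTheory GRing.Theory Num.Theory.
Local Open Scope ring_scope.

Lemma natr_pow2_neq0 (K : fieldType) n : (2%:R : K) != 0 -> ((2 ^ n)%:R : K) != 0.
Proof. by move=> two_neq0; rewrite natrX expf_neq0. Qed.

Section Quartic.
Variable R : comNzRingType.

Definition quartic (u3 u2 u1 u0 : R) : {poly R} :=
  'X^4 + u3 *: 'X^3 + u2 *: 'X^2 + u1 *: 'X + u0%:P.

Lemma coef_quartic u3 u2 u1 u0 i :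
  (quartic u3 u2 u1 u0)`_i = [:: u0; u1; u2; u3; 1]`_i.
Proof.
rewrite /quartic !(coefD, coefZ, coefXn, coefX, coefC).
by do 5?[case: i => [|i] /=]; rewrite ?nth_nil; ring.
Qed.

Lemma size_quartic u3 u2 u1 u0 : size (quartic u3 u2 u1 u0) = 5%N.
Proof.
apply/eqP; rewrite eqn_leq; apply/andP; split.
  by apply/leq_sizeP => j hj; rewrite coef_quartic nth_default.
rewrite ltnNge; apply/negP => small.
by have := coef_quartic u3 u2 u1 u0 4; rewrite nth_default //= => /esym/eqP; rewrite oner_eq0.
Qed.

Lemma quartic_monic u3 u2 u1 u0 : quartic u3 u2 u1 u0 \is monic.
Proof. by rewrite monicE lead_coefE size_quartic coef_quartic. Qed.

Lemma quartic_inj u3 u2 u1 u0 v3 v2 v1 v0 :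
  quartic u3 u2 u1 u0 = quartic v3 v2 v1 v0 ->
  [/\ u3 = v3, u2 = v2, u1 = v1 & u0 = v0].
Proof.
move=> huv; have coef_eq i : (quartic u3 u2 u1 u0)`_i = (quartic v3 v2 v1 v0)`_i.
  by rewrite huv.
by move: (coef_eq 3%N) (coef_eq 2%N) (coef_eq 1%N) (coef_eq 0%N); rewrite !coef_quartic.
Qed.

Lemma mul_monic_quadratics s t S T :
  ('X^2 - s *: 'X + t%:P) * ('X^2 - S *: 'X + T%:P) =
  quartic (- (s + S)) (t + T + s * S) (- (s * T + S * t)) (t * T) :> {poly R}.
Proof.
rewrite /quartic -!mul_polyC !(polyCN, polyCD, polyCM); ring.
Qed.

End Quartic.

Section ReducibleQuartic.
Variable K : fieldType.

Lemma size3_monic_quadratic (q : {poly K}) : size q = 3%N ->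
  exists s t, q = lead_coef q *: ('X^2 - s *: 'X + t%:P).
Proof.
move=> q3; have lcq : lead_coef q = q`_2 by rewrite lead_coefE q3.
have q2_neq0 : q`_2 != 0 by rewrite -lcq lead_coef_eq0 -size_poly_eq0 q3.
exists (- (q`_1 / q`_2)), (q`_0 / q`_2); rewrite lcq.
apply/polyP => i; rewrite coefZ !(coefD, coefB, coefN, coefZ, coefXn, coefX, coefC).
do 3?[case: i => [|i] /=]; rewrite ?mulr0 ?mulr1; try by field.
by rewrite subrr addr0 mulr0 nth_default // q3.
Qed.

Lemma monic_quartic_reducible (p : {poly K}) :
  p \is monic -> size p = 5%N -> ~ irreducible_poly p ->
  (exists r, root p r) \/
  exists s t S T, p = ('X^2 - s *: 'X + t%:P) * ('X^2 - S *: 'X + T%:P).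
Proof.
move=> p_monic p5 p_red.
have [q [q_ne1 q_dvd q_nassoc]] :
    exists q : {poly K}, [/\ size q != 1%N, q %| p & ~~ (q %= p)].
  apply: NNPP => no_factor; apply: p_red; split; first by rewrite p5.
  move=> q q_ne1 q_dvd; apply: NNPP => q_nassoc; apply: no_factor.
  by exists q; split => //; apply/negP.
case/dvdpP: q_dvd => q' pE.
have q_neq0 : q != 0 by apply: contra_eq_neq p5 => q0; rewrite pE q0 mulr0 size_poly0.
have q'_neq0 : q' != 0 by apply: contra_eq_neq p5 => q0; rewrite pE q0 mul0r size_poly0.
have sizes : (size q' + size q).-1 = 5%N by rewrite -size_mul // -pE.
have q_ne5 : size q != 5%N.
  by apply: contra q_nassoc => /eqP q5; rewrite -dvdp_size_eqp ?p5 ?q5 // pE dvdp_mull.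
have := size_poly_gt0 q; have := size_poly_gt0 q'; rewrite q_neq0 q'_neq0 => q'_gt0 q_gt0.
have root_of_linear (l : {poly K}) : size l = 2%N -> l %| p -> exists r, root p r.
  move=> /poly2_root[r lr] /dvdpP[l' ->]; exists r.
  by rewrite rootM lr orbT.
have [q2|q3|q4] : [\/ size q = 2%N, size q = 3%N | size q = 4%N].
- have : size q = 2%N \/ size q = 3%N \/ size q = 4%N.
    by move: q_ne1 q_ne5 sizes q_gt0 q'_gt0 => /eqP ? /eqP ? ? ? ?; lia.
  by case=> [->|[->|->]]; [apply: Or31|apply: Or32|apply: Or33].
- by left; apply: (root_of_linear q q2); rewrite pE dvdp_mull.
- right; have q'3 : size q' = 3%N by move: sizes; rewrite q3; lia.
  have [s [t qE]] := size3_monic_quadratic q3.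
  have [S [T q'E]] := size3_monic_quadratic q'3.
  exists S, T, s, t.
  have lc1 : lead_coef q' * lead_coef q = 1.
    by rewrite -lead_coefM -pE; apply/monicP.
  by rewrite pE {1}q'E {1}qE -scalerAl -scalerAr scalerA lc1 scale1r.
- left; apply: (root_of_linear q'); first by move: sizes; rewrite q4; lia.
  by rewrite pE dvdp_mulr.
Qed.

End ReducibleQuartic.

Section SplitQuartic.
Variables (K : fieldType) (c2 c1 c0 x s S t T : K).
Hypothesis two_neq0 : (2%:R : K) != 0.
Hypotheses (rel3 : s + S = 4%:R * x)
  (rel2 : t + T + s * S = - (2%:R * c1 + 4%:R * x * c2))
  (rel1 : s * T + S * t = 8%:R * c0 + 4%:R * x * c1)
  (rel0 : t * T = c1 ^+ 2 - 4%:R * c2 * c0 - 4%:R * x * c0).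

Lemma split_quartic_eq_cubic_root : s = S -> x ^+ 3 + c2 * x ^+ 2 + c1 * x + c0 = 0.
Proof.
move=> sS; have eight_neq0 : (8%:R : K) != 0 := natr_pow2_neq0 3 two_neq0.
have s2x : s = 2%:R * x.
  by apply: (mulfI two_neq0); transitivity (s + S); [rewrite -sS | rewrite rel3]; ring.
apply: (mulfI eight_neq0); rewrite mulr0.
have -> : 8%:R * (x ^+ 3 + c2 * x ^+ 2 + c1 * x + c0) =
    (8%:R * c0 + 4%:R * x * c1 - (s * T + S * t))
    + s * (t + T + s * S + (2%:R * c1 + 4%:R * x * c2)).
  by rewrite -sS s2x; ring.
by rewrite rel1 rel2; ring.
Qed.

(* Put m := s S.  The squares (s - S)^2, (t - T)^2 and the product (s - S)(t - T)
   are polynomials in m, and the identity ((s - S)(t - T))^2 = (s - S)^2 (t - T)^2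
   is exactly what makes e a root of the cubic. *)
Lemma split_quartic_cubic_root : s != S ->
  let e := (t - T) / (s - S) in
  e ^+ 3 + c2 * e ^+ 2 + c1 * e + c0 = 0 /\
  4%:R * (s + e + c2) * (x - e) =
    (s - 2%:R * e) ^+ 2 - 4%:R * (3%:R * e ^+ 2 + 2%:R * c2 * e + c1).
Proof.
move=> sS e; have sS_neq0 : s - S != 0 by rewrite subr_eq0.
have sum_tT : t + T = - (2%:R * c1 + 4%:R * x * c2) - s * S by rewrite -rel2 addrK.
have dS2 : (s - S) ^+ 2 = (4%:R * x) ^+ 2 - 4%:R * (s * S) by rewrite -rel3; ring.
have dT2 : (t - T) ^+ 2 = (- (2%:R * c1 + 4%:R * x * c2) - s * S) ^+ 2
     - 4%:R * (c1 ^+ 2 - 4%:R * c2 * c0 - 4%:R * x * c0).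
  by rewrite -sum_tT -rel0; ring.
have dSdT : (s - S) * (t - T) = 4%:R * x * (- (2%:R * c1 + 4%:R * x * c2) - s * S)
     - 2%:R * (8%:R * c0 + 4%:R * x * c1).
  by rewrite -sum_tT -rel1 -rel3; ring.
have compat : ((s - S) * (t - T)) ^+ 2 = (s - S) ^+ 2 * (t - T) ^+ 2 by ring.
rewrite dSdT dS2 dT2 in compat.
move: dS2 dT2 dSdT compat; set m := s * S => dS2 dT2 dSdT compat.
split.
  apply: (mulIf (expf_neq0 4 sS_neq0)); rewrite mul0r.
  have -> : (e ^+ 3 + c2 * e ^+ 2 + c1 * e + c0) * (s - S) ^+ 4 =
      (t - T) ^+ 2 * ((s - S) * (t - T)) + c2 * (t - T) ^+ 2 * (s - S) ^+ 2
      + c1 * ((s - S) * (t - T)) * (s - S) ^+ 2 + c0 * ((s - S) ^+ 2) ^+ 2.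
    by rewrite /e; field.
  rewrite dS2 dT2 dSdT.
  transitivity (- (c2 + x) * ((4%:R * x * (- (2%:R * c1 + 4%:R * x * c2) - m)
     - 2%:R * (8%:R * c0 + 4%:R * x * c1)) ^+ 2 - ((4%:R * x) ^+ 2 - 4%:R * m) *
     ((- (2%:R * c1 + 4%:R * x * c2) - m) ^+ 2
     - 4%:R * (c1 ^+ 2 - 4%:R * c2 * c0 - 4%:R * x * c0)))); first ring.
  by rewrite compat subrr mulr0.
apply/eqP; rewrite -subr_eq0; apply/eqP.
apply: (mulIf (expf_neq0 2 sS_neq0)); rewrite mul0r.
have -> : (4%:R * (s + e + c2) * (x - e) - ((s - 2%:R * e) ^+ 2
      - 4%:R * (3%:R * e ^+ 2 + 2%:R * c2 * e + c1))) * (s - S) ^+ 2 =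
    4%:R * (t - T) ^+ 2 + (s - S) * (t - T) * (4%:R * x + 4%:R * c2)
    + (s - S) ^+ 2 * (m + c2 * (4%:R * x) + 4%:R * c1)
    + (s - S) ^+ 2 * (4%:R * x - s - S) * s.
  by rewrite /e /m; field.
rewrite dS2 dT2 dSdT (_ : 4%:R * x - s - S = 0); first ring.
by rewrite -rel3; ring.
Qed.

End SplitQuartic.

Section CompletedSquare.
Variables (K : fieldType) (E : wcurve K).
Hypothesis two_neq0 : (2%:R : K) != 0.

Lemma four_neq0 : (4%:R : K) != 0.
Proof. exact: natr_pow2_neq0 2 two_neq0. Qed.

Definition alpha1 := a1 E / 2%:R.
Definition alpha3 := a3 E / 2%:R.
Definition c2 := a2 E + alpha1 ^+ 2.
Definition c1 := a4 E + 2%:R * alpha1 * alpha3.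
Definition c0 := a6 E + alpha3 ^+ 2.
Definition rhs (x : K) := x ^+ 3 + c2 * x ^+ 2 + c1 * x + c0.
Definition rhs' (x : K) := 3%:R * x ^+ 2 + 2%:R * c2 * x + c1.
Definition eta (x y : K) := y + alpha1 * x + alpha3.

Definition aff_eta (x e : K) := Aff x (e - alpha1 * x - alpha3).

Lemma aff_etaE x y : Aff x y = aff_eta x (eta x y).
Proof. by rewrite /aff_eta /eta; congr Aff; ring. Qed.

Lemma on_curve_aff_eta x e : on_curve E (aff_eta x e) = (e ^+ 2 == rhs x).
Proof.
rewrite /on_curve /aff_eta -[RHS]subr_eq0 -subr_eq0; congr (_ == 0).
by rewrite /rhs /c2 /c1 /c0 /alpha1 /alpha3; field.
Qed.

Lemma dbl_denomE x y : 2%:R * y + a1 E * x + a3 E = 2%:R * eta x y.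
Proof. by rewrite /eta /alpha1 /alpha3; field. Qed.

Definition dbl_slope x e := rhs' x / (2%:R * e).
Definition dbl_x x e := dbl_slope x e ^+ 2 - c2 - 2%:R * x.

Lemma dbl_aff_eta x e : e != 0 ->
  dbl E (aff_eta x e) =
  aff_eta (dbl_x x e) (- dbl_slope x e * (dbl_x x e - x) - e).
Proof.
move=> e_neq0; rewrite {1}/aff_eta /dbl dbl_denomE.
have -> : eta x (e - alpha1 * x - alpha3) = e by rewrite /eta; ring.
rewrite mulf_eq0 (negbTE two_neq0) (negbTE e_neq0) /=.
rewrite /aff_eta /dbl_x /dbl_slope /rhs' /c2 /c1 /alpha1 /alpha3.
by congr Aff; field; rewrite e_neq0 two_neq0.
Qed.

Lemma delta2_hornerE xP yP r : (delta2 E (Aff xP yP)).[r] =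
  rhs' r ^+ 2 - 4%:R * (2%:R * r + c2 + xP) * rhs r.
Proof.
rewrite /delta2 /theta2 /psi2sq /psi3 !hornerE /=.
by rewrite /rhs /rhs' /c2 /c1 /c0 /alpha1 /alpha3 /b2 /b4 /b6 /b8; field.
Qed.

Lemma disc_at_rhs_root e : rhs e = 0 ->
  disc E = 16%:R * rhs' e ^+ 2 * ((3%:R * e + c2) ^+ 2 - 4%:R * rhs' e).
Proof.
move=> rhs_e.
have a6E : a6 E = - (e ^+ 3 + c2 * e ^+ 2 + c1 * e) - alpha3 ^+ 2.
  by apply/eqP; rewrite -subr_eq0 -rhs_e /rhs /c0; apply/eqP; ring.
by rewrite /disc /b2 /b4 /b6 /b8 a6E /rhs' /c2 /c1 /alpha1 /alpha3; field.
Qed.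

Lemma rhs_neq0_at_delta2_root xP yP r : elliptic E ->
  (delta2 E (Aff xP yP)).[r] = 0 -> rhs r != 0.
Proof.
move=> E_ell; rewrite delta2_hornerE => delta_r; apply: contraNneq E_ell => rhs_r.
move: delta_r; rewrite rhs_r mulr0 subr0 => /eqP; rewrite expf_eq0 /= => /eqP rhs'_r.
by rewrite (disc_at_rhs_root rhs_r) rhs'_r !(expr2, mulr0, mul0r).
Qed.

Lemma delta2_root_dbl_x xP yP r : rhs r != 0 ->
  (delta2 E (Aff xP yP)).[r] = 0 ->
  xP = rhs' r ^+ 2 / (4%:R * rhs r) - c2 - 2%:R * r.
Proof.
move=> rhs_r; rewrite delta2_hornerE => delta_r; apply/eqP; rewrite eq_sym -subr_eq0.
suff : 4%:R * rhs r * (rhs' r ^+ 2 / (4%:R * rhs r) - c2 - 2%:R * r - xP) == 0.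
  by rewrite !mulf_eq0 (negbTE four_neq0) (negbTE rhs_r).
by apply/eqP; rewrite -[RHS]delta_r; field; rewrite rhs_r four_neq0.
Qed.

(* The ratio eta(2Q) / eta(Q) for x(Q) = r, read off the tangent line at Q. *)
Definition tangent_ratio r x := - (rhs' r * (x - r) + 2%:R * rhs r) / (2%:R * rhs r).

Lemma rhs_tangent_ratio r x : rhs r != 0 ->
  x = rhs' r ^+ 2 / (4%:R * rhs r) - c2 - 2%:R * r ->
  rhs x = rhs r * tangent_ratio r x ^+ 2.
Proof.
move=> rhs_r ->; move: rhs_r; rewrite /tangent_ratio /rhs /rhs' => rhs_r.
by field; rewrite rhs_r two_neq0 four_neq0.
Qed.

Lemma dbl_aff_eta_tangent r e : e != 0 -> e ^+ 2 = rhs r ->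
  let x := rhs' r ^+ 2 / (4%:R * rhs r) - c2 - 2%:R * r in
  dbl E (aff_eta r e) = aff_eta x (e * tangent_ratio r x).
Proof.
move=> e_neq0 e2 x; rewrite dbl_aff_eta //.
have xE : dbl_x r e = x.
  by rewrite /x /dbl_x /dbl_slope -e2; field; rewrite e_neq0 two_neq0 four_neq0.
rewrite xE /tangent_ratio /dbl_slope -e2; congr aff_eta.
by field; rewrite e_neq0 two_neq0.
Qed.

Lemma halve_at_delta2_root xP yP r : elliptic E -> on_curve E (Aff xP yP) ->
  eta xP yP != 0 -> (delta2 E (Aff xP yP)).[r] = 0 ->
  exists Q, on_curve E Q /\ dbl E Q = Aff xP yP.
Proof.
move=> E_ell P_on eP_neq0 delta_r.
have rhs_r := rhs_neq0_at_delta2_root E_ell delta_r.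
have xPE := delta2_root_dbl_x rhs_r delta_r.
rewrite aff_etaE on_curve_aff_eta in P_on *; move/eqP: P_on.
move: eP_neq0; set eP := eta xP yP => eP_neq0 eP2.
have rhs_xP := rhs_tangent_ratio rhs_r xPE.
move: rhs_xP; set h := tangent_ratio r xP => rhs_xP.
have h_neq0 : h != 0.
  apply: contraNneq eP_neq0 => h0.
  have : eP ^+ 2 == 0 by rewrite eP2 rhs_xP h0 expr2 !mulr0.
  by rewrite expf_eq0.
have eQ2 : (eP / h) ^+ 2 = rhs r.
  by rewrite expr_div_n eP2 rhs_xP; field; rewrite h_neq0.
have eQ_neq0 : eP / h != 0 by rewrite mulf_neq0 ?invr_eq0.
exists (aff_eta r (eP / h)); split; first by rewrite on_curve_aff_eta eQ2.
rewrite dbl_aff_eta_tangent // -xPE -/h; congr aff_eta.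
by field.
Qed.

Lemma delta2_quartic xP yP : delta2 E (Aff xP yP) =
  quartic (- (4%:R * xP)) (- (b4 E + b2 E * xP)) (- (2%:R * b6 E + 2%:R * b4 E * xP))
          (- (b8 E + b6 E * xP)).
Proof.
rewrite /delta2 /theta2 /psi2sq /psi3 /quartic -!mul_polyC.
by rewrite !(polyCN, polyCD, polyCM); ring.
Qed.

Lemma delta2_split_relations xP yP s t S T :
  delta2 E (Aff xP yP) = ('X^2 - s *: 'X + t%:P) * ('X^2 - S *: 'X + T%:P) ->
  [/\ s + S = 4%:R * xP, t + T + s * S = - (2%:R * c1 + 4%:R * xP * c2),
      s * T + S * t = 8%:R * c0 + 4%:R * xP * c1
    & t * T = c1 ^+ 2 - 4%:R * c2 * c0 - 4%:R * xP * c0].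
Proof.
rewrite delta2_quartic mul_monic_quadratics => /quartic_inj[rel3 rel2 rel1 rel0].
split.
- by apply: oppr_inj; rewrite -rel3.
- by rewrite -rel2 /b4 /b2 /c1 /c2 /alpha1 /alpha3; field.
- by rewrite -[LHS]opprK -rel1 /b6 /b4 /c0 /c1 /alpha1 /alpha3; field.
- by rewrite -rel0 /b8 /b6 /b4 /b2 /c0 /c1 /c2 /alpha1 /alpha3; field.
Qed.

End CompletedSquare.

Section TwoIsogeny.
Variables (K : fieldType) (al1 A2 al3 A4 e : K).

(* The general curve with a 2-torsion point of abscissa e (see rhs_curve_of_root):
   eta^2 = (x - e) ((x - e)^2 + t2 (x - e) + t1), where eta = y + al1 x + al3. *)
Definition curve_of_root := WCurve (2%:R * al1) A2 (2%:R * al3) A4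
  (- (e ^+ 3 + (A2 + al1 ^+ 2) * e ^+ 2 + (A4 + 2%:R * al1 * al3) * e) - al3 ^+ 2).
Definition t2 := 3%:R * e + (A2 + al1 ^+ 2).
Definition t1 := 3%:R * e ^+ 2 + 2%:R * (A2 + al1 ^+ 2) * e + (A4 + 2%:R * al1 * al3).
Definition tdisc := t2 ^+ 2 - 4%:R * t1.

(* The 2-isogenous curve Y^2 = X (X^2 - 2 t2 X + t2^2 - 4 t1) and the degree-2
   isogeny from it onto curve_of_root, x = e + ((X - t2)^2 - 4 t1) / (4 X). *)
Definition isog_curve := WCurve 0 (- (2%:R * t2)) 0 tdisc 0.
Definition isog_xnum : {poly K} := 'X^2 + (4%:R * e - 2%:R * t2)%:P * 'X + tdisc%:P.
Definition isog_map := CMap isog_xnum ((4%:R : K)%:P * 'X)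
  (- ('X * ((2%:R * al1)%:P * isog_xnum + (8%:R * al3)%:P * 'X)))
  (tdisc%:P - 'X^2) ((8%:R : K)%:P * 'X^2).

Lemma isog_map_maps_into : maps_into isog_curve curve_of_root isog_map.
Proof.
rewrite /maps_into /cmul /cscale /cadd /cubic /lin /isog_map /isog_curve /curve_of_root /=.
rewrite /isog_xnum /tdisc /t1 /t2 -!mul_polyC.
by congr pair; ring.
Qed.

Hypothesis two_neq0 : (2%:R : K) != 0.

Lemma alpha1_curve_of_root : alpha1 curve_of_root = al1.
Proof. by rewrite /alpha1 /=; field. Qed.

Lemma alpha3_curve_of_root : alpha3 curve_of_root = al3.
Proof. by rewrite /alpha3 /=; field. Qed.

Lemma c2_curve_of_root : c2 curve_of_root = A2 + al1 ^+ 2.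
Proof. by rewrite /c2 alpha1_curve_of_root. Qed.

Lemma rhs_curve_of_root x :
  rhs curve_of_root x = (x - e) * ((x - e) ^+ 2 + t2 * (x - e) + t1).
Proof.
rewrite /rhs c2_curve_of_root /c1 /c0 alpha1_curve_of_root alpha3_curve_of_root.
by rewrite /t2 /t1 /=; ring.
Qed.

Lemma disc_curve_of_root : disc curve_of_root = 16%:R * t1 ^+ 2 * tdisc.
Proof.
rewrite (@disc_at_rhs_root K curve_of_root two_neq0 e); last first.
  by rewrite rhs_curve_of_root subrr mul0r.
rewrite /rhs' c2_curve_of_root /c1 alpha1_curve_of_root alpha3_curve_of_root.
by rewrite /tdisc /t2 /t1 /=; congr (_ * _ * (_ - _)); ring.
Qed.

Hypothesis E_ell : elliptic curve_of_root.

Lemma t1_neq0 : t1 != 0.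
Proof.
apply: contraNneq E_ell => t1_0.
by rewrite /elliptic disc_curve_of_root t1_0 expr2 !(mul0r, mulr0, eqxx).
Qed.

Lemma tdisc_neq0 : tdisc != 0.
Proof. by apply: contraNneq E_ell => td0; rewrite /elliptic disc_curve_of_root td0 mulr0 eqxx. Qed.

Lemma elliptic_isog_curve : elliptic isog_curve.
Proof.
rewrite /elliptic; have -> : disc isog_curve = 16%:R * 16%:R * tdisc ^+ 2 * t1.
  by rewrite /disc /b2 /b4 /b6 /b8 /isog_curve /= /tdisc; ring.
have sixteen_neq0 : (16%:R : K) != 0 := natr_pow2_neq0 4 two_neq0.
by rewrite !mulf_neq0 ?expf_neq0 ?tdisc_neq0 ?t1_neq0.
Qed.

Lemma isogeny_deg2_isog_map : isogeny_deg2 isog_curve curve_of_root isog_map.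
Proof.
have four_neq0 := four_neq0 two_neq0.
have eight_neq0 : (8%:R : K) != 0 := natr_pow2_neq0 3 two_neq0.
have size_xnum : size isog_xnum = 3%N.
  rewrite /isog_xnum -addrA size_polyDl size_polyXn // size_MXaddC.
  by case: ifP => // _; rewrite size_polyC; case: (_ != 0).
split => /=.
- exact: isog_map_maps_into.
- by rewrite mulf_neq0 ?polyC_eq0 ?polyX_eq0.
- by rewrite mulf_neq0 ?polyC_eq0 ?expf_neq0 ?polyX_eq0.
- rewrite mul_polyC coprimepZr // -[X in coprimep _ X]subr0 -polyC0 coprimep_XsubC.
  by rewrite rootE /isog_xnum !hornerE /= expr2 !(mulr0, mul0r, add0r) tdisc_neq0.
- by rewrite size_xnum mul_polyC size_scale // size_polyX.
Qed.

Lemma isog_map_preimage xP yP XQ :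
  on_curve curve_of_root (Aff xP yP) -> eta curve_of_root xP yP != 0 ->
  4%:R * XQ * (xP - e) = (XQ - t2) ^+ 2 - 4%:R * t1 ->
  exists Q, on_curve isog_curve Q /\ maps_to isog_map Q (Aff xP yP).
Proof.
have four_neq0 := four_neq0 two_neq0.
have eight_neq0 : (8%:R : K) != 0 := natr_pow2_neq0 3 two_neq0.
have sixteen_neq0 : (16%:R : K) != 0 := natr_pow2_neq0 4 two_neq0.
rewrite (aff_etaE curve_of_root) (on_curve_aff_eta _ two_neq0).
set eP := eta curve_of_root xP yP => /eqP eP2 eP_neq0 XQ_rel.
have XQ_neq0 : XQ != 0.
  apply: contraNneq tdisc_neq0 => XQ0; move: XQ_rel.
  by rewrite XQ0 !(mulr0, mul0r, sub0r, sqrrN) /tdisc => ->.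
have xPE : xP = e + ((XQ - t2) ^+ 2 - 4%:R * t1) / (4%:R * XQ).
  by rewrite -XQ_rel; field; rewrite four_neq0 XQ_neq0.
set D := tdisc - XQ ^+ 2.
have rhs_xP : rhs curve_of_root xP = (xP - e) * D ^+ 2 / (16%:R * XQ ^+ 2).
  rewrite rhs_curve_of_root xPE /D /tdisc.
  by field; rewrite XQ_neq0 four_neq0 sixteen_neq0.
have D_neq0 : D != 0.
  apply: contraNneq eP_neq0 => D0.
  have : eP ^+ 2 == 0 by rewrite eP2 rhs_xP D0 expr2 !(mulr0, mul0r).
  by rewrite expf_eq0.
exists (Aff XQ (8%:R * XQ ^+ 2 * eP / D)); split.
  rewrite /on_curve /isog_curve /=; apply/eqP; rewrite !mul0r !addr0.
  rewrite expr_div_n exprMn eP2 rhs_xP xPE /tdisc.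
  by field; rewrite XQ_neq0 four_neq0 sixteen_neq0 D_neq0.
rewrite /maps_to /isog_map /= !hornerE /= (negbTE (mulf_neq0 four_neq0 XQ_neq0)).
split; first by rewrite !mulf_neq0.
rewrite /aff_eta alpha1_curve_of_root alpha3_curve_of_root; congr Aff.
  by rewrite {1}xPE /tdisc; field; rewrite XQ_neq0 four_neq0.
rewrite -/D xPE.
by field; rewrite XQ_neq0 D_neq0 eight_neq0.
Qed.

End TwoIsogeny.

Lemma curve_of_rootE (K : fieldType) (E : wcurve K) e : (2%:R : K) != 0 ->
  rhs E e = 0 -> E = curve_of_root (alpha1 E) (a2 E) (alpha3 E) (a4 E) e.
Proof.
case: E => A1 A2 A3 A4 A6 two_neq0; rewrite /rhs /c2 /c1 /c0 /alpha1 /alpha3 /= => rhs_e.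
rewrite /curve_of_root; congr WCurve; try by field.
by apply/eqP; rewrite -subr_eq0 -rhs_e; apply/eqP; field.
Qed.

Lemma two_isogenous_lift (K : fieldType) (E : wcurve K) e xP yP XQ :
  (2%:R : K) != 0 -> elliptic E -> rhs E e = 0 ->
  on_curve E (Aff xP yP) -> eta E xP yP != 0 ->
  4%:R * XQ * (xP - e) = (XQ - (3%:R * e + c2 E)) ^+ 2 - 4%:R * rhs' E e ->
  exists (E' : wcurve K) (f : cmap K),
    [/\ elliptic E', isogeny_deg2 E' E f &
        exists Q, on_curve E' Q /\ maps_to f Q (Aff xP yP)].
Proof.
move=> two_neq0 E_ell rhs_e P_on eP_neq0 XQ_rel.
have {}XQ_rel : 4%:R * XQ * (xP - e) =
    (XQ - t2 (alpha1 E) (a2 E) e) ^+ 2 - 4%:R * t1 (alpha1 E) (a2 E) (alpha3 E) (a4 E) e.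
  by rewrite XQ_rel /t2 /t1 /rhs' /c2 /c1.
have E_eq := curve_of_rootE two_neq0 rhs_e.
rewrite E_eq in E_ell P_on eP_neq0.
exists (isog_curve (alpha1 E) (a2 E) (alpha3 E) (a4 E) e).
exists (isog_map (alpha1 E) (a2 E) (alpha3 E) (a4 E) e).
split.
- exact: elliptic_isog_curve.
- by move: (isogeny_deg2_isog_map two_neq0 E_ell); rewrite -E_eq.
- by apply: (isog_map_preimage two_neq0 E_ell P_on eP_neq0); exact: XQ_rel.
Qed.

Theorem lemma4p1 (K : fieldType) (E : wcurve K) (P : point K) :
  (2%:R : K) != 0 -> elliptic E -> on_curve E P ->
  [\/ irreducible_poly (delta2 E P),
      two_torsion E P,
      (exists Q : point K, on_curve E Q /\ dbl E Q = P)
    | exists (E' : wcurve K) (f : cmap K),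
        [/\ elliptic E', isogeny_deg2 E' E f &
            exists Q : point K, on_curve E' Q /\ maps_to f Q P]].
Proof.
move=> two_neq0 E_ell; case: P => [_|xP yP P_on]; first by apply: Or42.
have [denom0|denom_neq0] := eqVneq (2%:R * yP + a1 E * xP + a3 E) 0.
  by apply: Or42; rewrite /two_torsion /dbl denom0 eqxx.
have eP_neq0 : eta E xP yP != 0.
  by apply: contraNneq denom_neq0 => eP0; rewrite (dbl_denomE _ two_neq0) eP0 mulr0.
have [|delta_red] := classic (irreducible_poly (delta2 E (Aff xP yP))).
  by apply: Or41.
have delta_monic : delta2 E (Aff xP yP) \is monic by rewrite delta2_quartic quartic_monic.
have delta_size : size (delta2 E (Aff xP yP)) = 5%N by rewrite delta2_quartic size_quartic.
have [[r /eqP delta_r]|[s [t [S [T split_delta]]]]] :=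
  monic_quartic_reducible delta_monic delta_size delta_red.
  by apply: Or43; apply: (halve_at_delta2_root two_neq0 E_ell P_on eP_neq0 delta_r).
apply: Or44; have [rel3 rel2 rel1 rel0] := delta2_split_relations two_neq0 split_delta.
have sS : s != S.
  apply: contraNneq eP_neq0 => sS.
  have rhs_xP : rhs E xP = 0 := split_quartic_eq_cubic_root two_neq0 rel3 rel2 rel1 sS.
  move: P_on; rewrite (aff_etaE E) (on_curve_aff_eta _ two_neq0) rhs_xP.
  by rewrite expf_eq0.
have [rhs_e XQ_rel] := split_quartic_cubic_root rel3 rel2 rel1 rel0 sS.
move: rhs_e XQ_rel; set e := (t - T) / (s - S) => rhs_e XQ_rel.
apply: (two_isogenous_lift two_neq0 E_ell rhs_e P_on eP_neq0 (XQ := s + e + c2 E)).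
by rewrite XQ_rel /rhs'; ring.
Qed.
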